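(* Let $\rho$ be a density matrix of rank two on the $N$-qubit space $H=(\mathbb{C}^2)^{\otimes N}$. Let $|\tilde 0\rangle,|\tilde 1\rangle$ be an orthonormal basis of the support (range) of $\rho$, and define operators on $H$ $$\tau_1=|\tilde 0\rangle\langle\tilde 1|+|\tilde 1\rangle\langle\tilde 0|,\quad \tau_2=-i|\tilde 0\rangle\langle\tilde 1|+i|\tilde 1\rangle\langle\tilde 0|,\quad \tau_3=|\tilde 0\rangle\langle\tilde 0|-|\tilde 1\rangle\langle\tilde 1|.$$ Let $W$ be the real symmetric $3\times 3$ matrix with entries $W_{ij}=\mathrm{Tr}\big(\mathcal{S}\,(\tau_i\otimes\tau_j)\big)$, $i,j\in\{1,2,3\}$, and let $w_{\min}$ be its smallest eigenvalue. Then $$\mathcal{E}(\rho)=\mathcal{C}(\rho)+\tfrac12\big(1-\mathrm{Tr}(\rho^2)\big)\,w_{\min}.$$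
   Context: Let $\sigma_1,\sigma_2,\sigma_3$ be the Pauli matrices and $\sigma_0=\mathbb{I}$. For an $N$-qubit state $\rho$ put $T_{\mu_1\dots\mu_N}=\mathrm{Tr}(\rho\,\sigma_{\mu_1}\otimes\dots\otimes\sigma_{\mu_N})$ and define the length of correlations $\mathcal{C}(\rho)=\sum_{j_1,\dots,j_N=1}^{3}T_{j_1\dots j_N}^2$; for a pure state $|\Psi\rangle$ write $\mathcal{C}(\Psi)=\mathcal{C}(|\Psi\rangle\langle\Psi|)$. Consider two copies $H\otimes H$ of the $N$-qubit space, where qubit $n$ of the first copy is paired with qubit $n'$ of the second copy, and define the operator $\mathcal{S}=\bigotimes_{n=1}^{N}\Big(\sum_{j=1}^{3}\sigma_j^{(n)}\otimes\sigma_j^{(n')}\Big)$ on $H\otimes H$; then $\mathcal{C}(\rho)=\mathrm{Tr}\big((\rho\otimes\rho)\,\mathcal{S}\big)$. The convex-roof extension is $\mathcal{E}(\rho)=\min\sum_k\mu_k\,\mathcal{C}(\Psi_k)$, the minimum taken over all pure-state decompositions $\rho=\sum_k\mu_k|\Psi_k\rangle\langle\Psi_k|$ with $\mu_k>0$, $\sum_k\mu_k=1$ and unit vectors $|\Psi_k\rangle$. *)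

From HB Require Import structures.
From mathcomp Require Import all_boot all_order all_algebra.
From mathcomp Require Import reals.
From mathcomp Require Import complex mxtens.
Set Implicit Arguments. Unset Strict Implicit. Unset Printing Implicit Defensive.
Import Order.TTheory GRing.Theory Num.Theory.
Local Open Scope ring_scope.
Local Open Scope complex_scope.

Section QubitDefs.
Variable R : realType.
Local Notation C := R[i].

Definition adjmx m n (A : 'M[C]_(m, n)) : 'M[C]_(n, m) :=
  \matrix_(i, j) conjc (A j i).

Definition pauli (k : 'I_4) : 'M[C]_2 :=
  \matrix_(a, b)
    match val k with
    | 0 => if a == b then 1 else 0
    | 1 => if a == b then 0 else 1
    | 2 => if a == b then 0 else
           if val a == 0 then - (Complex 0 1) else Complex 0 1
    | _ => if a == b then (if val a == 0 then 1 else -1) else 0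
    end.

Definition qbit N (n : 'I_N) (i : 'I_(2 ^ N)) : 'I_2 := inord (odd (i %/ 2 ^ n)).

Definition qtensor N (A : 'I_N -> 'M[C]_2) : 'M[C]_(2 ^ N) :=
  \matrix_(i, j) \prod_(n < N) A n (qbit n i) (qbit n j).

Definition pauli_string N (mu : 'I_N -> 'I_4) : 'M[C]_(2 ^ N) :=
  qtensor (fun n => pauli (mu n)).

Definition corrT N (rho : 'M[C]_(2 ^ N)) (mu : 'I_N -> 'I_4) : C :=
  \tr (rho *m pauli_string mu).

Definition corr_length N (rho : 'M[C]_(2 ^ N)) : C :=
  \sum_(j : {ffun 'I_N -> 'I_3}) (corrT rho (fun n => lift ord0 (j n))) ^+ 2.

Definition corr_length_pure N (psi : 'cV[C]_(2 ^ N)) : C :=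
  corr_length (psi *m adjmx psi).

Definition pair_op : 'M[C]_(2 * 2) :=
  \sum_(k < 3) (pauli (lift ord0 k) *t pauli (lift ord0 k)).

(* S = (x)_n (sum_j sigma_j^(n) (x) sigma_j^(n'))  on H (x) H, where an index of
   H (x) H is a pair (i1, i2) (via mxtens_index) of indices of the two copies and
   qubit n of the first copy is paired with qubit n of the second copy. *)
Definition Sop N : 'M[C]_(2 ^ N * 2 ^ N) :=
  \matrix_(I, J)
    \prod_(n < N)
      pair_op (mxtens_index (qbit n (mxtens_unindex I).1, qbit n (mxtens_unindex I).2))
              (mxtens_index (qbit n (mxtens_unindex J).1, qbit n (mxtens_unindex J).2)).

Definition density_matrix N (rho : 'M[C]_(2 ^ N)) : Prop :=
  [/\ adjmx rho = rho,
      (forall v : 'cV[C]_(2 ^ N), 0 <= (adjmx v *m rho *m v) 0 0)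
    & \tr rho = 1].

Definition pure_decomposition N (rho : 'M[C]_(2 ^ N)) K
    (mu : 'I_K -> R) (psi : 'I_K -> 'cV[C]_(2 ^ N)) : Prop :=
  [/\ forall k, 0 < mu k,
      \sum_(k < K) mu k = 1,
      (forall k, adjmx (psi k) *m psi k = 1)
    & rho = \sum_(k < K) (mu k)%:C *: (psi k *m adjmx (psi k))].

(* "E(rho) = e": e is the minimum of sum_k mu_k C(Psi_k) over all pure-state
   decompositions (the minimum is attained and is a lower bound). *)
Definition convex_roof_value N (rho : 'M[C]_(2 ^ N)) (e : C) : Prop :=
  (exists K (mu : 'I_K -> R) (psi : 'I_K -> 'cV[C]_(2 ^ N)),
      pure_decomposition rho mu psi /\
      \sum_(k < K) (mu k)%:C * corr_length_pure (psi k) = e)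
  /\ (forall K (mu : 'I_K -> R) (psi : 'I_K -> 'cV[C]_(2 ^ N)),
      pure_decomposition rho mu psi ->
      e <= \sum_(k < K) (mu k)%:C * corr_length_pure (psi k)).

Definition tau N (v0 v1 : 'cV[C]_(2 ^ N)) (k : 'I_3) : 'M[C]_(2 ^ N) :=
  match val k with
  | 0 => v0 *m adjmx v1 + v1 *m adjmx v0
  | 1 => - (Complex 0 1) *: (v0 *m adjmx v1) + (Complex 0 1) *: (v1 *m adjmx v0)
  | _ => v0 *m adjmx v0 - v1 *m adjmx v1
  end.

Definition Wmat N (v0 v1 : 'cV[C]_(2 ^ N)) : 'M[C]_3 :=
  \matrix_(i, j) \tr (Sop N *m (tau v0 v1 i *t tau v0 v1 j)).

End QubitDefs.

(* Let M = (|0~> |1~>) be the isometry onto the support of rho, so that rho = M Z M^* for a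
   qubit density matrix Z.  Writing a Hermitian X as sum_k c_k sigma_k with a real Bloch vector
   c, the length of correlations of M X M^* is the quadratic form of c for the real Gram matrix
   G_kl = Tr (S (T_k (x) T_l)), T_k = M sigma_k M^*, whose block indexed by 1..3 is W.
   The vectors of a pure-state decomposition of rho lie in the range of M, so they are pure
   qubits with Bloch vectors c_k (c_k0 = 1/2, |c_k|^2 = 1/2) whose mean is the Bloch vector
   cbar of Z, and Huygens' formula for the form of G - w I gives
     sum_k mu_k C(Psi_k) = C(rho) + w (1/2 - |cbar|^2) + sum_k mu_k (G - w I)(c_k - cbar),
   with 1/2 - |cbar|^2 = (1 - Tr rho^2) / 2.  Since c_k - cbar vanishes at index 0, the last
   sum only involves W - w_min I and is nonnegative; it vanishes for the two pure states cut
   out on the Bloch sphere by the chord through cbar along an eigenvector of W for w_min. *)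

From HB Require Import structures.
From mathcomp Require Import all_boot all_order all_algebra.
From mathcomp Require Import reals.
From mathcomp Require Import complex mxtens.
From mathcomp Require Import sesquilinear spectral.
From mathcomp Require Import ring lra.
Set Implicit Arguments. Unset Strict Implicit. Unset Printing Implicit Defensive.
Import Order.TTheory GRing.Theory Num.Theory.
Local Open Scope ring_scope.

Local Notation q0 := (@ord0 1).
Local Notation q1 := (@Ordinal 2 1 isT).
Local Notation j0 := (@ord0 2).
Local Notation j1 := (@Ordinal 3 1 isT).
Local Notation j2 := (@Ordinal 3 2 isT).
Local Notation k0 := (@ord0 3).
Local Notation k1 := (@Ordinal 4 1 isT).
Local Notation k2 := (@Ordinal 4 2 isT).
Local Notation k3 := (@Ordinal 4 3 isT).

Lemma ord2P (a : 'I_2) : a = q0 \/ a = q1.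
Proof. by case: a => [[|[|a]] Ha] //; [left | right]; apply: val_inj. Qed.

Lemma ord3P (i : 'I_3) : [\/ i = j0, i = j1 | i = j2].
Proof.
by case: i => [[|[|[|i]]] Hi] //; [apply: Or31 | apply: Or32 | apply: Or33]; apply: val_inj.
Qed.

Lemma lift0_ord3 : (lift ord0 j0 = k1) * (lift ord0 j1 = k2) * (lift ord0 j2 = k3).
Proof. by split; [split|]; apply: val_inj. Qed.

Lemma big_ord2 (V : nmodType) (F : 'I_2 -> V) : \sum_(a < 2) F a = F q0 + F q1.
Proof. by rewrite big_ord_recl big_ord1; congr (_ + _); congr F; apply: val_inj. Qed.

Lemma big_ord3 (V : nmodType) (F : 'I_3 -> V) : \sum_(i < 3) F i = F j0 + F j1 + F j2.
Proof.
rewrite !big_ord_recl big_ord0 addr0 !addrA.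
by congr (_ + _ + _); congr F; apply: val_inj.
Qed.

Lemma big_ord4 (V : nmodType) (F : 'I_4 -> V) :
  \sum_(k < 4) F k = F k0 + F k1 + F k2 + F k3.
Proof.
rewrite !big_ord_recl big_ord0 addr0 !addrA.
by congr (_ + _ + _ + _); congr F; apply: val_inj.
Qed.

(** * Hermitian adjoints and the Pauli expansion of S *)

Section Adjoint.
Variable R : realType.
Local Notation C := R[i].
Local Open Scope sesquilinear_scope.

Lemma adjmxE m n (A : 'M[C]_(m, n)) : adjmx A = A ^t*.
Proof. by apply/matrixP => i j; rewrite !mxE. Qed.

Lemma adjmxK m n (A : 'M[C]_(m, n)) : adjmx (adjmx A) = A.
Proof. by rewrite !adjmxE trmxCK. Qed.

Lemma adjmxM m n p (A : 'M[C]_(m, n)) (B : 'M[C]_(n, p)) :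
  adjmx (A *m B) = adjmx B *m adjmx A.
Proof. by rewrite !adjmxE trmx_mul map_mxM. Qed.

Lemma mxtrace_adjmx n (A : 'M[C]_n) : \tr (adjmx A) = Num.conj (\tr A).
Proof. by rewrite rmorph_sum; apply: eq_bigr => i _; rewrite mxE. Qed.

Lemma herm_entry n (A : 'M[C]_n) : adjmx A = A -> forall i j, conjc (A j i) = A i j.
Proof. by move=> hA i j; rewrite -[in RHS]hA mxE. Qed.

Lemma adjmx0 m n : adjmx (0 : 'M[C]_(m, n)) = 0.
Proof. by rewrite adjmxE trmx0 map_mx0. Qed.

Lemma adjmx_pauli k : adjmx (pauli R k) = pauli R k.
Proof.
apply/matrixP => a b; rewrite !mxE.
by case: k => [[|[|[|[|k]]]] Hk] //=; case: a => [[|[|a]] Ha] //=;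
  case: b => [[|[|b]] Hb] //=; simpc.
Qed.

Lemma adjmx_pauli_string N mu :
  adjmx (pauli_string R (N:=N) mu) = pauli_string R mu.
Proof.
apply/matrixP => i j; rewrite !mxE rmorph_prod; apply: eq_bigr => n _.
by rewrite -[in RHS]adjmx_pauli [in RHS]mxE.
Qed.

End Adjoint.

Lemma mxtrace_tens (R : comPzRingType) m n (A : 'M[R]_m) (B : 'M[R]_n) :
  \tr (A *t B) = \tr A * \tr B.
Proof. by rewrite /mxtrace mulr_sum; apply: eq_bigr => i _; rewrite mxE. Qed.

Section PauliExpansion.
Variables (R : realType) (N : nat).
Local Notation C := R[i].
Local Notation d := (2 ^ N)%N.
Local Notation ps s := (pauli_string R (fun n => lift ord0 (s n))).

Definition corr_form (A B : 'M[C]_d) : C :=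
  \sum_(s : {ffun 'I_N -> 'I_3})
    corrT A (fun n => lift ord0 (s n)) * corrT B (fun n => lift ord0 (s n)).

Lemma corr_lengthE (A : 'M[C]_d) : corr_length A = corr_form A A.
Proof. by apply: eq_bigr => s _; rewrite expr2. Qed.

Lemma corr_formC (A B : 'M[C]_d) : corr_form A B = corr_form B A.
Proof. by apply: eq_bigr => s _; rewrite mulrC. Qed.

Lemma corrT_real (A : 'M[C]_d) mu : adjmx A = A -> corrT A mu \is Num.real.
Proof.
move=> hA; apply/CrealP.
by rewrite /corrT -mxtrace_adjmx adjmxM hA adjmx_pauli_string mxtrace_mulC.
Qed.

Lemma corr_form_real (A B : 'M[C]_d) :
  adjmx A = A -> adjmx B = B -> corr_form A B \is Num.real.
Proof.
by move=> hA hB; apply: rpred_sum => s _; rewrite rpredM ?corrT_real.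
Qed.

Lemma corrT_sum (I : finType) (a : I -> C) (A : I -> 'M[C]_d) mu :
  corrT (\sum_i a i *: A i) mu = \sum_i a i * corrT (A i) mu.
Proof.
rewrite /corrT mulmx_suml raddf_sum /=.
by apply: eq_bigr => i _; rewrite -scalemxAl mxtraceZ.
Qed.

Lemma corr_form_sum (I J : finType) (a : I -> C) (b : J -> C)
    (A : I -> 'M[C]_d) (B : J -> 'M[C]_d) :
  corr_form (\sum_i a i *: A i) (\sum_j b j *: B j) =
  \sum_i \sum_j a i * b j * corr_form (A i) (B j).
Proof.
rewrite /corr_form; under eq_bigr do rewrite !corrT_sum big_distrlr.
rewrite exchange_big; apply: eq_bigr => i _ /=.
rewrite exchange_big; apply: eq_bigr => j _ /=.
by rewrite mulr_sumr; apply: eq_bigr => s _; ring.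
Qed.

Lemma Sop_pauli_sum : Sop R N = \sum_(s : {ffun 'I_N -> 'I_3}) ps s *t ps s.
Proof.
apply/matrixP => I J; rewrite mxE summxE.
under eq_bigr do rewrite /pair_op summxE.
rewrite bigA_distr_bigA /=; apply: eq_bigr => s _.
by rewrite !mxE -big_split; apply: eq_bigr => n _; rewrite tensmxE.
Qed.

Lemma mxtrace_Sop_tens (A B : 'M[C]_d) : \tr (Sop R N *m (A *t B)) = corr_form A B.
Proof.
rewrite Sop_pauli_sum mulmx_suml raddf_sum /=; apply: eq_bigr => s _.
by rewrite tensmx_mul mxtrace_tens /corrT !(mxtrace_mulC _ (ps s)).
Qed.

End PauliExpansion.

(** * Bloch representation of qubit operators *)

Section Bloch.
Variable R : realType.
Local Notation C := R[i].
Local Open Scope complex_scope.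

Definition bloch (c : 'I_4 -> R) : 'M[C]_2 := \sum_k (c k)%:C *: pauli R k.

Definition bloch_coord (Z : 'M[C]_2) (k : 'I_4) : R :=
  complex.Re (\tr (Z *m pauli R k)) / 2.

Lemma blochE c : bloch c = \matrix_(a, b)
  if val a == 0%N then
    if val b == 0%N then (c k0 + c k3) +i* 0 else c k1 -i* c k2
  else
    if val b == 0%N then c k1 +i* c k2 else (c k0 - c k3) +i* 0.
Proof.
apply/matrixP => a b; rewrite /bloch summxE big_ord4 !mxE.
by case: a => [[|[|a]] Ha] //=; case: b => [[|[|b]] Hb] //=;
  apply/eqP; rewrite eq_complex /=; apply/andP; split; apply/eqP; ring.
Qed.

Lemma bloch_coordE Z k : bloch_coord Z k =
  if val k == 0%N then (complex.Re (Z q0 q0) + complex.Re (Z q1 q1)) / 2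
  else if val k == 1%N then (complex.Re (Z q0 q1) + complex.Re (Z q1 q0)) / 2
  else if val k == 2%N then (complex.Im (Z q1 q0) - complex.Im (Z q0 q1)) / 2
  else (complex.Re (Z q0 q0) - complex.Re (Z q1 q1)) / 2.
Proof.
rewrite /bloch_coord /mxtrace big_ord2 !mxE !big_ord2 !mxE.
case: k => [[|[|[|[|k]]]] Hk] //=;
 case: (Z q0 q0) => [a b]; case: (Z q0 q1) => [a1 b1]; case: (Z q1 q0) => [a2 b2];
 case: (Z q1 q1) => [a3 b3] /=; ring.
Qed.

Lemma bloch_coordK Z : adjmx Z = Z -> bloch (bloch_coord Z) = Z.
Proof.
move=> /herm_entry h; rewrite blochE; apply/matrixP => a b; rewrite mxE !bloch_coordE /=.
move: (h q0 q0) (h q0 q1) (h q1 q1).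
case: (ord2P a) => ->; case: (ord2P b) => -> /=;
case: (Z q0 q0) => [x y]; case: (Z q0 q1) => [x1 y1]; case: (Z q1 q0) => [x2 y2];
case: (Z q1 q1) => [x3 y3] /=;
move=> /eqP; rewrite eq_complex => /andP [/eqP e1 /eqP e2];
move=> /eqP; rewrite eq_complex => /andP [/eqP e3 /eqP e4];
move=> /eqP; rewrite eq_complex => /andP [/eqP e5 /eqP e6];
rewrite /= in e1 e2 e3 e4 e5 e6;
apply/eqP; rewrite eq_complex /=; apply/andP; split; apply/eqP; lra.
Qed.

Lemma mxtrace_bloch_sqr c : \tr (bloch c *m bloch c) = (2 * \sum_k c k ^+ 2)%:C.
Proof.
rewrite blochE /mxtrace big_ord2 !mxE !big_ord2 !mxE big_ord4 /=.
by apply/eqP; rewrite eq_complex /=; apply/andP; split; apply/eqP; ring.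
Qed.

Lemma det_mx2 (Z : 'M[C]_2) : \det Z = Z q0 q0 * Z q1 q1 - Z q0 q1 * Z q1 q0.
Proof.
rewrite (expand_det_row _ q0) big_ord2 /cofactor !det_mx11 !mxE /=.
have -> : lift q0 0 = q1 by apply: val_inj.
have -> : lift q1 0 = q0 by apply: val_inj.
by rewrite expr0 expr1 mul1r mulN1r mulrN.
Qed.

Lemma det_bloch c : \det (bloch c) = (c k0 ^+ 2 - c k1 ^+ 2 - c k2 ^+ 2 - c k3 ^+ 2)%:C.
Proof.
rewrite det_mx2 blochE !mxE /=.
by apply/eqP; rewrite eq_complex /=; apply/andP; split; apply/eqP; ring.
Qed.

Lemma bloch_sum I (r : seq I) (P : pred I) (mu : I -> R) (c : I -> 'I_4 -> R) :
  bloch (fun k => \sum_(i <- r | P i) mu i * c i k) =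
  \sum_(i <- r | P i) (mu i)%:C *: bloch (c i).
Proof.
rewrite /bloch; under eq_bigr do rewrite rmorph_sum scaler_suml.
rewrite exchange_big /=; apply: eq_bigr => i _.
by rewrite scaler_sumr; apply: eq_bigr => k _; rewrite rmorphM scalerA.
Qed.

Lemma eq_bloch (c c' : 'I_4 -> R) : c =1 c' -> bloch c = bloch c'.
Proof. by move=> e; apply: eq_bigr => k _; rewrite e. Qed.

Lemma bloch_coord_sum (I : finType) (mu : I -> R) (Z : I -> 'M[C]_2) k :
  bloch_coord (\sum_i (mu i)%:C *: Z i) k = \sum_i mu i * bloch_coord (Z i) k.
Proof.
rewrite /bloch_coord mulmx_suml [\tr _]raddf_sum raddf_sum /= mulr_suml.
apply: eq_bigr => i _; rewrite -scalemxAl mxtraceZ.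
by case: (\tr _) => a b /=; rewrite mul0r subr0 mulrA.
Qed.

End Bloch.

Section PureStates.
Variable R : realType.
Local Notation C := R[i].
Local Open Scope complex_scope.

Lemma pauli0 : pauli R ord0 = 1%:M.
Proof. by apply/matrixP => a b; rewrite !mxE /=; case: (a == b). Qed.

Lemma adjmx_pure (phi : 'cV[C]_2) : adjmx (phi *m adjmx phi) = phi *m adjmx phi.
Proof. by rewrite adjmxM adjmxK. Qed.

Lemma bloch_coord_pure0 (phi : 'cV[C]_2) : adjmx phi *m phi = 1 ->
  bloch_coord (phi *m adjmx phi) ord0 = 1 / 2.
Proof. by move=> h; rewrite /bloch_coord pauli0 mulmx1 mxtrace_mulC h mxtrace1. Qed.

Lemma bloch_coord_pure_sqr (phi : 'cV[C]_2) : adjmx phi *m phi = 1 ->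
  \sum_k bloch_coord (phi *m adjmx phi) k ^+ 2 = 1 / 2.
Proof.
move=> h.
have : \tr (phi *m adjmx phi *m (phi *m adjmx phi)) = 1.
  by rewrite mulmxA -[phi *m _ *m phi]mulmxA h mulmx1 mxtrace_mulC h mxtrace1.
rewrite -{1 2}(bloch_coordK (adjmx_pure phi)) mxtrace_bloch_sqr.
by move=> /eqP; rewrite eq_complex /= => /andP [/eqP e _]; lra.
Qed.

Lemma bloch_coord_col2 (x u v : R) :
  let psi : 'cV[C]_2 := \col_i (if i == q0 then x%:C else u +i* v) in
  adjmx psi *m psi = (x ^+ 2 + u ^+ 2 + v ^+ 2)%:C%:M /\
  [/\ bloch_coord (psi *m adjmx psi) k1 = x * u,
      bloch_coord (psi *m adjmx psi) k2 = x * v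
    & bloch_coord (psi *m adjmx psi) k3 = (x ^+ 2 - u ^+ 2 - v ^+ 2) / 2].
Proof.
split.
  apply/matrixP => i j; rewrite !ord1 !mxE big_ord2 !mxE /=.
  by apply/eqP; rewrite eq_complex /=; apply/andP; split; apply/eqP; ring.
by rewrite !bloch_coordE !mxE /= !big_ord1 !mxE /=; split; field.
Qed.

Lemma pure_state_of_bloch (n : 'I_3 -> R) : \sum_i n i ^+ 2 = 1 ->
  exists2 phi : 'cV[C]_2, adjmx phi *m phi = 1 &
    forall i, bloch_coord (phi *m adjmx phi) (lift ord0 i) = n i / 2.
Proof.
rewrite big_ord3 => hn.
suff [x [u [v [hnorm ea eb ec]]]] : exists x u v : R,
    [/\ x ^+ 2 + u ^+ 2 + v ^+ 2 = 1, x * u = n j0 / 2, x * v = n j1 / 2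
      & (x ^+ 2 - u ^+ 2 - v ^+ 2) / 2 = n j2 / 2].
  have [hpsi [e1 e2 e3]] := bloch_coord_col2 x u v.
  exists (\col_i (if i == q0 then x%:C else u +i* v)); first by rewrite hpsi hnorm.
  by move=> i; case: (ord3P i) => ->; [rewrite -ea -e1 | rewrite -eb -e2 | rewrite -ec -e3];
    congr bloch_coord; apply: val_inj.
move: (n j0) (n j1) (n j2) hn => a b c hn.
have [c_eqN1|c_neqN1] := eqVneq (1 + c) 0.
  have c_eq : c = -1 by lra.
  have [a_eq b_eq] : a = 0 /\ b = 0 by split; nra.
  by exists 0, 1, 0; rewrite a_eq b_eq c_eq; split; lra.
have c_gtN1 : 0 < 1 + c by rewrite lt_def c_neqN1 /=; nra.
(* away from the south pole, (a, b, c) is the Bloch vector of the normalised (1 + c, a + i b) *)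
pose s := Num.sqrt (2 * (1 + c))^-1.
have hs : s ^+ 2 * (2 * (1 + c)) = 1.
  by rewrite sqr_sqrtr ?mulVf ?mulf_neq0 ?pnatr_eq0 // invr_ge0; lra.
have hn' : s ^+ 2 * (a ^+ 2 + b ^+ 2 + c ^+ 2) = s ^+ 2 by rewrite hn mulr1.
have hs' y : y * (s ^+ 2 * (2 * (1 + c))) = y by rewrite hs mulr1.
exists (s * (1 + c)), (s * a), (s * b).
by split; [nra | move: (hs' a) | move: (hs' b) | move: (hs' c)]; nra.
Qed.

Lemma psd_mx2_tr_det_ge0 (Z : 'M[C]_2) : adjmx Z = Z ->
  (forall u : 'cV[C]_2, 0 <= (adjmx u *m Z *m u) 0 0) -> 0 <= \tr Z * \det Z.
Proof.
move=> /herm_entry h hpos.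
(* [u0], [u1] are columns of the adjugate of [Z], so [Z u] is [det Z] times a basis vector *)
pose u0 : 'cV[C]_2 := \col_i (if i == q0 then - Z q0 q1 else Z q0 q0).
pose u1 : 'cV[C]_2 := \col_i (if i == q0 then Z q1 q1 else - Z q1 q0).
have E0 : (adjmx u0 *m Z *m u0) 0 0 = Z q0 q0 * \det Z.
  by rewrite det_mx2 !mxE !big_ord2 !mxE /= !big_ord2 !mxE /= rmorphN !h; ring.
have E1 : (adjmx u1 *m Z *m u1) 0 0 = Z q1 q1 * \det Z.
  by rewrite det_mx2 !mxE !big_ord2 !mxE /= !big_ord2 !mxE /= rmorphN !h; ring.
by rewrite /mxtrace big_ord2 mulrDl -E0 -E1 addr_ge0.
Qed.

End PureStates.

(** * Real quadratic forms *)

Section BilinearForm.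
Variables (R : comPzRingType) (I : finType).
Implicit Types (G : I -> I -> R) (x y : I -> R).

Definition bform G x y : R := \sum_i \sum_j x i * y j * G i j.

Lemma eq_bform G x x' y y' : x =1 x' -> y =1 y' -> bform G x y = bform G x' y'.
Proof. by move=> ex ey; apply: eq_bigr => i _; apply: eq_bigr => j _; rewrite ex ey. Qed.

Lemma bform_suml (K : finType) G (mu : K -> R) (c : K -> I -> R) y :
  \sum_k mu k * bform G (c k) y = bform G (fun i => \sum_k mu k * c k i) y.
Proof.
rewrite /bform; under eq_bigr do rewrite mulr_sumr.
rewrite exchange_big /=; apply: eq_bigr => i _.
under eq_bigr do rewrite mulr_sumr.
rewrite exchange_big /=; apply: eq_bigr => j _.
by rewrite !mulr_suml; apply: eq_bigr => k _; ring.
Qed.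

Lemma bformC G x y : (forall i j, G i j = G j i) -> bform G x y = bform G y x.
Proof.
move=> hG; rewrite /bform exchange_big; apply: eq_bigr => i _; apply: eq_bigr => j _.
by rewrite hG; ring.
Qed.

Lemma bform_subl G x x' y : bform G (fun i => x i - x' i) y = bform G x y - bform G x' y.
Proof.
rewrite /bform -sumrB; apply: eq_bigr => i _.
by rewrite -sumrB; apply: eq_bigr => j _; ring.
Qed.

Lemma bform_subr G x y y' : bform G x (fun j => y j - y' j) = bform G x y - bform G x y'.
Proof.
rewrite /bform -sumrB; apply: eq_bigr => i _.
by rewrite -sumrB; apply: eq_bigr => j _; ring.
Qed.

Lemma bform_barycentre (K : finType) G (mu : K -> R) (c : K -> I -> R) (m : I -> R) :
  (forall i j, G i j = G j i) -> \sum_k mu k = 1 -> (forall i, m i = \sum_k mu k * c k i) ->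
  \sum_k mu k * bform G (c k) (c k) =
  bform G m m + \sum_k mu k * bform G (fun i => c k i - m i) (fun i => c k i - m i).
Proof.
move=> hG hmu hm.
under [X in _ = _ + X]eq_bigr do rewrite bform_subl !bform_subr [bform G m (c _)]bformC //.
rewrite [X in _ = _ + X](eq_bigr (fun k => mu k * bform G (c k) (c k) -
  2 * (mu k * bform G (c k) m) + mu k * bform G m m)); last by move=> k _; ring.
rewrite big_split sumrB /= -mulr_sumr -mulr_suml hmu mul1r bform_suml.
by rewrite (eq_bform G (fun i => esym (hm i)) (frefl m)); ring.
Qed.

Lemma bform_shift G (w : R) x :
  bform (fun i j => G i j - w * (i == j)%:R) x x = bform G x x - w * \sum_i x i ^+ 2.
Proof.
rewrite /bform mulr_sumr -sumrB; apply: eq_bigr => i _.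
rewrite (eq_bigr (fun j => x i * x j * G i j - w * (x i * x j * (i == j)%:R)));
  last by move=> j _; ring.
have diag : \sum_j x i * x j * (i == j)%:R = x i ^+ 2.
  rewrite (bigD1 i) //= eqxx mulr1 big1 ?addr0 ?expr2 // => j /negbTE ji.
  by rewrite eq_sym ji mulr0.
by rewrite sumrB -mulr_sumr diag.
Qed.

Lemma bformZ G a b x y :
  bform G (fun i => a * x i) (fun j => b * y j) = a * b * bform G x y.
Proof.
rewrite /bform mulr_sumr; apply: eq_bigr => i _.
by rewrite mulr_sumr; apply: eq_bigr => j _; ring.
Qed.

Lemma bform_eigenvector G (w : R) e : (forall j, \sum_i e i * G i j = w * e j) ->
  bform G e e = w * \sum_j e j ^+ 2.
Proof.
move=> he; rewrite /bform exchange_big mulr_sumr; apply: eq_bigr => j _ /=.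
under eq_bigr do rewrite mulrAC.
by rewrite -mulr_suml he; ring.
Qed.

End BilinearForm.

Lemma bform_lift0 (R : comPzRingType) n (G : 'I_n.+1 -> 'I_n.+1 -> R) x : x ord0 = 0 ->
  bform G x x = bform (fun i j => G (lift ord0 i) (lift ord0 j))
                      (fun i => x (lift ord0 i)) (fun i => x (lift ord0 i)).
Proof.
move=> x0; rewrite /bform big_ord_recl big1 ?add0r => [|j _]; last by rewrite x0 !mul0r.
apply: eq_bigr => i _.
by rewrite big_ord_recl x0 mulr0 mul0r add0r.
Qed.

Section Rayleigh.
Variable R : realType.
Local Notation C := R[i].
Local Open Scope complex_scope.

Lemma rayleigh_lb n (A : 'M[C]_n) w : adjmx A = A ->
  (forall x, eigenvalue A x -> w <= x) ->
  forall z : 'cV_n, w * (adjmx z *m z) 0 0 <= (adjmx z *m A *m z) 0 0.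
Proof.
move=> hA hw z.
have /orthomx_spectralP A_spectral : A \is normalmx.
  by apply/normalmxP; rewrite -adjmxE hA.
set P := spectralmx A in A_spectral; set sp := spectral_diag A in A_spectral.
have P_unit : P \in unitmx by exact: spectral_unit.
have P_inv : invmx P = adjmx P by rewrite invmx_unitary ?adjmxE ?spectral_unitarymx.
have sp_ge i : w <= sp 0 i.
  apply: hw; apply/eigenvalueP; exists (row i P).
    rewrite -row_mul {1}A_spectral !mulmxA mulmxV // mul1mx.
    by apply/rowP => j; rewrite mul_diag_mx !mxE.
  apply/negP => /eqP row0.
  have : row i (P *m invmx P) = 0 by rewrite row_mul row0 mul0mx.
  by rewrite mulmxV // => /rowP /(_ i); rewrite !mxE eqxx /= => /eqP; rewrite oner_eq0.
(* in the eigenbasis both forms are diagonal *)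
set y := P *m z.
have -> : adjmx z *m A *m z = adjmx y *m diag_mx sp *m y.
  by rewrite {1}A_spectral P_inv /y adjmxM !mulmxA.
have -> : adjmx z *m z = adjmx y *m y.
  by rewrite /y adjmxM -mulmxA [adjmx P *m _]mulmxA -P_inv mulVmx // mul1mx.
clearbody y; rewrite -subr_ge0 !mxE mulr_sumr -sumrB; apply: sumr_ge0 => i _.
rewrite mul_mx_diag !mxE; set u := conjc _.
have -> : u * sp 0 i * y i 0 - w * (u * y i 0) = (sp 0 i - w) * (y i 0 * u) by ring.
by rewrite mulr_ge0 ?subr_ge0 ?mulcJ_ge0.
Qed.

Section RealSymmetric.
Variables (n : nat) (G : 'I_n -> 'I_n -> R).
Hypothesis G_sym : forall i j, G i j = G j i.
Local Notation A := (\matrix_(i, j) (G i j)%:C : 'M[C]_n).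
Local Notation col y := (\col_i (y i)%:C : 'cV[C]_n).

Lemma adjmx_real_sym : adjmx A = A.
Proof. by apply/matrixP => i j; rewrite !mxE conjc_real G_sym. Qed.

Lemma sqr_norm_real_col (y : 'I_n -> R) :
  (adjmx (col y) *m col y) 0 0 = (\sum_i y i ^+ 2)%:C.
Proof.
by rewrite mxE rmorph_sum; apply: eq_bigr => i _; rewrite !mxE conjc_real -rmorphM expr2.
Qed.

Lemma form_real_col (y : 'I_n -> R) :
  (adjmx (col y) *m A *m col y) 0 0 = (bform G y y)%:C.
Proof.
rewrite mxE /bform [RHS]rmorph_sum; under [RHS]eq_bigr do rewrite rmorph_sum.
rewrite [RHS]exchange_big /=; apply: eq_bigr => j _.
rewrite [X in X * _]mxE mulr_suml; apply: eq_bigr => i _.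
by rewrite !mxE conjc_real -!rmorphM; congr (_%:C); ring.
Qed.

Lemma spectral_lb_real w : (0 < n)%N ->
  (forall x, eigenvalue A x -> w <= x) -> w = (complex.Re w)%:C.
Proof.
move=> n_gt0 hw; have := rayleigh_lb adjmx_real_sym hw (col (fun=> 1)).
rewrite sqr_norm_real_col form_real_col lecE => /andP [/eqP + _] /=.
rewrite expr1n sumr_const card_ord; case: w {hw} => a b /=.
rewrite mulr0 add0r => /esym/eqP; rewrite mulf_eq0 pnatr_eq0 gtn_eqF // orbF.
by move=> /eqP ->.
Qed.

Lemma bform_ge_spectral_lb (w : R) : (forall x, eigenvalue A x -> w%:C <= x) ->
  forall y, w * \sum_i y i ^+ 2 <= bform G y y.
Proof.
move=> hw y; have := rayleigh_lb adjmx_real_sym hw (col y).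
by rewrite sqr_norm_real_col form_real_col -rmorphM lecR.
Qed.

Lemma real_eigenvector (w : R) : eigenvalue A w%:C ->
  exists2 e : 'I_n -> R, \sum_i e i ^+ 2 = 1 & forall j, \sum_i e i * G i j = w * e j.
Proof.
case/eigenvalueP => v hv /eqP v_neq0.
suff [u [i0 ui0_neq0] hu] : exists2 u : 'I_n -> R, exists i0, u i0 != 0 &
    forall j, \sum_i u i * G i j = w * u j.
  have su_gt0 : 0 < \sum_i u i ^+ 2.
    rewrite (bigD1 i0) //=; apply: ltr_wpDr.
      by apply: sumr_ge0 => i _; exact: sqr_ge0.
    by rewrite lt_def sqrf_eq0 ui0_neq0 sqr_ge0.
  pose s := Num.sqrt (\sum_i u i ^+ 2).
  have s_gt0 : 0 < s by rewrite sqrtr_gt0.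
  exists (fun i => u i / s).
    under eq_bigr do rewrite expr_div_n.
    by rewrite -mulr_suml sqr_sqrtr ?divff ?lt0r_neq0 // ltW.
  move=> j; under eq_bigr do rewrite mulrAC.
  by rewrite -mulr_suml hu mulrA.
(* the real and imaginary parts of [v] solve the same real linear system *)
have hv_entry j : \sum_i v 0 i * (G i j)%:C = w%:C * v 0 j.
  by move/rowP/(_ j): hv; rewrite !mxE => <-; apply: eq_bigr => i _; rewrite mxE.
have [i0 vi0_neq0] : exists i0, v 0 i0 != 0.
  apply/existsP; apply: contraT; rewrite negb_exists => /forallP v0.
  by case: v_neq0; apply/rowP => i; rewrite mxE; exact/eqP/negPn/v0.
have [hRe hIm] : (forall j, \sum_i complex.Re (v 0 i) * G i j = w * complex.Re (v 0 j)) /\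
                 (forall j, \sum_i complex.Im (v 0 i) * G i j = w * complex.Im (v 0 j)).
  split=> j; [move/(congr1 (@complex.Re R)): (hv_entry j)
              | move/(congr1 (@complex.Im R)): (hv_entry j)];
    rewrite raddf_sum /=; case: (v 0 j) => a b /=; rewrite mul0r ?subr0 ?addr0 => <-;
    by apply: eq_bigr => i _; case: (v 0 i) => a' b' /=; rewrite mulr0 ?subr0 ?add0r.
have [Re0|Re_neq0] := eqVneq (complex.Re (v 0 i0)) 0.
    exists (fun i => complex.Im (v 0 i)) => //; exists i0; apply: contra vi0_neq0 => /eqP Im0.
  by move: Re0 Im0; case: (v 0 i0) => a b /= -> ->.
by exists (fun i => complex.Re (v 0 i)); first exists i0.
Qed.

End RealSymmetric.

End Rayleigh.

Lemma bform_barycentre_sphere (R : realFieldType) (I K : finType) (G : I -> I -> R)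
    (mu : K -> R) (c : K -> I -> R) (m : I -> R) (w s : R) :
  (forall i j, G i j = G j i) -> \sum_k mu k = 1 -> (forall i, m i = \sum_k mu k * c k i) ->
  (forall k, \sum_i c k i ^+ 2 = s) ->
  \sum_k mu k * bform G (c k) (c k) =
  bform G m m + w * (s - \sum_i m i ^+ 2) +
  \sum_k mu k * (bform G (fun i => c k i - m i) (fun i => c k i - m i)
                 - w * \sum_i (c k i - m i) ^+ 2).
Proof.
move=> hG hmu hm hc.
have hGw i j : G i j - w * (i == j)%:R = G j i - w * (j == i)%:R by rewrite hG eq_sym.
have := bform_barycentre hGw hmu hm.
under eq_bigr do rewrite bform_shift hc.
under [in X in _ = _ + X]eq_bigr do rewrite bform_shift.
rewrite bform_shift.
have -> : \sum_k mu k * (bform G (c k) (c k) - w * s) =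
          \sum_k mu k * bform G (c k) (c k) - w * s.
  rewrite (eq_bigr (fun k => mu k * bform G (c k) (c k) - mu k * (w * s))) => [|k _];
    last by ring.
  by rewrite sumrB -mulr_suml hmu mul1r.
move=> H; lra.
Qed.

Lemma chord_through (R : rcfType) (I : finType) (r e : I -> R) :
  \sum_i r i ^+ 2 < 1 -> \sum_i e i ^+ 2 = 1 ->
  exists t1 t2 m : R, [/\ 0 < m < 1, m * t1 + (1 - m) * t2 = 0,
    \sum_i (r i + t1 * e i) ^+ 2 = 1 & \sum_i (r i + t2 * e i) ^+ 2 = 1].
Proof.
move=> r_in e_unit; pose b := \sum_i r i * e i.
have sqr_chord t : \sum_i (r i + t * e i) ^+ 2 = \sum_i r i ^+ 2 + 2 * t * b + t ^+ 2.
  rewrite (eq_bigr (fun i => r i ^+ 2 + 2 * t * (r i * e i) + t ^+ 2 * e i ^+ 2)) => [|i _];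
    last by ring.
  by rewrite !big_split /= -!mulr_sumr e_unit mulr1.
(* [t1], [t2] are the roots of [t ^+ 2 + 2 b t = 1 - |r|^2] *)
pose D := Num.sqrt (b ^+ 2 + (1 - \sum_i r i ^+ 2)).
have D2 : D ^+ 2 = b ^+ 2 + (1 - \sum_i r i ^+ 2) by rewrite sqr_sqrtr //; nra.
have D_gt0 : 0 < D by rewrite sqrtr_gt0; nra.
have Db_gt0 : 0 < D + b /\ 0 < D - b by split; nra.
exists (D - b), (- b - D), ((D + b) / (2 * D)); split.
- by apply/andP; split; rewrite ?ltr_pdivrMr ?ltr_pdivlMr ?mulr_gt0 //; nra.
- by field; rewrite lt0r_neq0.
- by rewrite sqr_chord; nra.
- by rewrite sqr_chord; nra.
Qed.

Section LiftedForm.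
Variables (R : realType) (n : nat) (G : 'I_n.+1 -> 'I_n.+1 -> R).
Local Open Scope complex_scope.
Local Notation G' i j := (G (lift ord0 i) (lift ord0 j)).

Lemma bform_lift0_ge (w : R) : (forall i j, G i j = G j i) ->
  (forall x, eigenvalue (\matrix_(i, j) (G' i j)%:C) x -> w%:C <= x) ->
  forall y, y ord0 = 0 -> w * \sum_k y k ^+ 2 <= bform G y y.
Proof.
move=> hG hw y y0; rewrite bform_lift0 // big_ord_recl y0 expr0n add0r.
exact: bform_ge_spectral_lb.
Qed.

Lemma bform_lift0_eigenvector (w t : R) (e : 'I_n -> R) y :
  (forall j, \sum_i e i * G' i j = w * e j) ->
  y ord0 = 0 -> (forall i, y (lift ord0 i) = t * e i) ->
  bform G y y = w * \sum_k y k ^+ 2.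
Proof.
move=> he y0 hy; rewrite bform_lift0 // (eq_bform _ hy hy) bformZ (bform_eigenvector he).
rewrite big_ord_recl y0 expr0n add0r mulr_sumr mulr_sumr mulr_sumr.
by apply: eq_bigr => i _; rewrite hy; ring.
Qed.

End LiftedForm.

(** * Operators on the range of an isometry *)

Section Compression.
Variables (R : realType) (N : nat).
Local Notation C := R[i].
Local Notation d := (2 ^ N)%N.
Local Open Scope complex_scope.

Lemma mulmx_adj_cols m n (M : 'M[C]_(m, n)) (Z : 'M[C]_n) :
  M *m Z *m adjmx M = \sum_a \sum_b Z a b *: (col a M *m adjmx (col b M)).
Proof.
apply/matrixP => i j; rewrite mxE summxE; under [RHS]eq_bigr do rewrite summxE.
rewrite [RHS]exchange_big /=; apply: eq_bigr => b _.
rewrite [X in X * _]mxE mulr_suml; apply: eq_bigr => a _.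
by rewrite !mxE big_ord1 !mxE; ring.
Qed.

Variable M : 'M[C]_(d, 2).

Definition pauli_image (k : 'I_4) : 'M[C]_d := M *m pauli R k *m adjmx M.

Definition gram (k l : 'I_4) : R :=
  complex.Re (corr_form (pauli_image k) (pauli_image l)).

Lemma adjmx_pauli_image k : adjmx (pauli_image k) = pauli_image k.
Proof. by rewrite !adjmxM adjmxK adjmx_pauli mulmxA. Qed.

Lemma corr_form_pauli_image k l :
  corr_form (pauli_image k) (pauli_image l) = (gram k l)%:C.
Proof. by rewrite RRe_real ?corr_form_real ?adjmx_pauli_image. Qed.

Lemma gram_sym k l : gram k l = gram l k.
Proof. by rewrite /gram corr_formC. Qed.

Lemma corr_length_compress_bloch c :
  corr_length (M *m bloch c *m adjmx M) = (bform gram c c)%:C.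
Proof.
have -> : M *m bloch c *m adjmx M = \sum_k (c k)%:C *: pauli_image k.
  rewrite mulmx_sumr mulmx_suml; apply: eq_bigr => k _.
  by rewrite -scalemxAr -scalemxAl.
rewrite corr_lengthE corr_form_sum /bform rmorph_sum; apply: eq_bigr => k _.
rewrite rmorph_sum; apply: eq_bigr => l _.
by rewrite corr_form_pauli_image !rmorphM.
Qed.

Hypothesis M_isometry : adjmx M *m M = 1%:M.

Lemma mxtrace_compress_sqr (Z : 'M[C]_2) :
  \tr (M *m Z *m adjmx M *m (M *m Z *m adjmx M)) = \tr (Z *m Z).
Proof.
rewrite !mulmxA -[M *m Z *m adjmx M *m M]mulmxA M_isometry mulmx1.
by rewrite mxtrace_mulC !mulmxA M_isometry mul1mx.
Qed.

End Compression.

Section OrthonormalPair.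
Variables (R : realType) (N : nat).
Local Notation C := R[i].
Local Notation d := (2 ^ N)%N.
Local Open Scope complex_scope.
Variables v0 v1 : 'cV[C]_d.
Local Notation M := (row_mx v0 v1).

Lemma col_row_mx2 : col q0 M = v0 /\ col q1 M = v1.
Proof.
by split; apply/colP => i; rewrite !mxE; case: splitP => j; rewrite (ord1 j).
Qed.

Lemma tau_pauli_image k : tau v0 v1 k = pauli_image M (lift ord0 k).
Proof.
have [c0 c1] := col_row_mx2.
rewrite /pauli_image mulmx_adj_cols !big_ord2 !mxE c0 c1.
case: k => [[|[|[|k]]] Hk] //=; rewrite ?scale0r ?scale1r ?add0r ?addr0 //.
by rewrite scaleN1r.
Qed.

Lemma Wmat_gram :
  Wmat v0 v1 = \matrix_(i, j) (gram M (lift ord0 i) (lift ord0 j))%:C.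
Proof.
apply/matrixP => i j.
by rewrite !mxE mxtrace_Sop_tens !tau_pauli_image corr_form_pauli_image.
Qed.

Hypotheses (v0_unit : adjmx v0 *m v0 = 1) (v1_unit : adjmx v1 *m v1 = 1)
  (v01_orth : adjmx v0 *m v1 = 0).

Lemma isometry_row_mx : adjmx M *m M = 1%:M.
Proof.
have v10_orth : adjmx v1 *m v0 = 0.
  by rewrite -[LHS]adjmxK adjmxM adjmxK v01_orth adjmx0.
rewrite adjmxE tr_row_mx map_col_mx -!adjmxE mul_col_row.
by rewrite v0_unit v1_unit v01_orth v10_orth -scalar_mx_block.
Qed.

End OrthonormalPair.

Section PureDecomposition.
Variable R : realType.
Local Notation C := R[i].
Local Open Scope complex_scope.

Lemma adjmx_mul_eq0 n (u : 'cV[C]_n) : adjmx u *m u = 0 -> u = 0.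
Proof.
move=> /matrixP /(_ 0 0); rewrite !mxE => /eqP; rewrite psumr_eq0 => [/allP u0|i _].
  apply/matrixP => i j; rewrite ord1 mxE; apply/eqP.
  by have := u0 i (mem_index_enum i); rewrite mxE /= mulrC mul_conjC_eq0.
by rewrite mxE mulrC mulcJ_ge0.
Qed.

Lemma form_rank1 n (u v : 'cV[C]_n) :
  (adjmx u *m (v *m adjmx v) *m u) 0 0 = `|(adjmx u *m v) 0 0| ^+ 2.
Proof.
rewrite !mulmxA -mulmxA [LHS]mxE big_ord1 normCK.
by rewrite -[adjmx v *m u]adjmxK adjmxM adjmxK [(adjmx _) 0 0]mxE.
Qed.

Variables (N : nat) (rho : 'M[C]_(2 ^ N)) (K : nat) (mu : 'I_K -> R)
  (psi : 'I_K -> 'cV[C]_(2 ^ N)).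
Hypothesis decomposition : pure_decomposition rho mu psi.

Lemma pure_decomposition_orthogonal (u : 'cV[C]_(2 ^ N)) :
  (adjmx u *m rho *m u) 0 0 = 0 -> forall k, adjmx u *m psi k = 0.
Proof.
case: decomposition => mu_gt0 _ _ ->.
rewrite mulmx_sumr mulmx_suml summxE => /eqP.
rewrite psumr_eq0 => [/allP u0 k|k _]; last first.
  by rewrite -scalemxAr -scalemxAl mxE form_rank1 mulr_ge0 ?exprn_ge0 // ler0c ltW.
apply/matrixP => i j; rewrite !ord1 [RHS]mxE; apply/eqP.
move: (u0 k (mem_index_enum k)); rewrite /= -scalemxAr -scalemxAl mxE form_rank1.
by rewrite mulf_eq0 fmorph_eq0 (gt_eqF (mu_gt0 k)) sqrf_eq0 normr_eq0.
Qed.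

End PureDecomposition.

Lemma range_isometry (R : realType) m n p (M : 'M[R[i]]_(m, n)) (A : 'M_(m, p)) :
  adjmx M *m M = 1%:M -> (A^T <= M^T)%MS -> M *m adjmx M *m A = A.
Proof.
move=> M_iso /submxP [D AD]; rewrite -[A]trmxK AD trmx_mul trmxK.
by rewrite mulmxA -[M *m _ *m M]mulmxA M_iso mulmx1.
Qed.

(** * The convex roof on a rank-two support *)

Section ConvexRoof.
Variables (R : realType) (N : nat).
Local Notation C := R[i].
Local Notation d := (2 ^ N)%N.
Local Open Scope complex_scope.
Variables (M : 'M[C]_(d, 2)) (rho : 'M[C]_d).
Hypotheses (M_isometry : adjmx M *m M = 1%:M) (rho_dm : density_matrix rho)
  (rho_range : M *m adjmx M *m rho = rho).

Definition reduced : 'M[C]_2 := adjmx M *m rho *m M.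
Local Notation Z := reduced.
Local Notation cbar := (bloch_coord reduced).

Lemma adjmx_rho : adjmx rho = rho.
Proof. by case: rho_dm. Qed.

Lemma rho_compress : rho = M *m Z *m adjmx M.
Proof.
have rho_range_r : rho *m (M *m adjmx M) = rho.
  by have := congr1 (@adjmx R _ _) rho_range; rewrite !adjmxM adjmxK adjmx_rho.
by rewrite /reduced !mulmxA rho_range -mulmxA rho_range_r.
Qed.

Lemma reduced_bloch : Z = bloch cbar.
Proof. by rewrite bloch_coordK // !adjmxM adjmxK adjmx_rho mulmxA. Qed.

Lemma mxtrace_reduced : \tr Z = 1.
Proof. by rewrite mxtrace_mulC mulmxA rho_range; case: rho_dm. Qed.

Lemma cbar0 : cbar ord0 = 1 / 2.
Proof. by rewrite /bloch_coord pauli0 mulmx1 mxtrace_reduced. Qed.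

Lemma mxtrace_rho_sqr : \tr (rho *m rho) = (2 * \sum_k cbar k ^+ 2)%:C.
Proof.
rewrite rho_compress (mxtrace_compress_sqr M_isometry).
by rewrite {1 2}reduced_bloch mxtrace_bloch_sqr.
Qed.

Lemma corr_length_rho : corr_length rho = (bform (gram M) cbar cbar)%:C.
Proof. by rewrite {1}rho_compress {1}reduced_bloch corr_length_compress_bloch. Qed.

Lemma cbar_interior : \rank rho = 2%N -> \sum_i (2 * cbar (lift ord0 i)) ^+ 2 < 1.
Proof.
move=> rank_rho.
have det_neq0 : \det Z != 0.
  rewrite -unitfE -unitmxE -row_full_unit /row_full eqn_leq rank_leq_col /=.
  by rewrite -{1}rank_rho rho_compress (leq_trans (mxrankM_maxl _ _) (mxrankM_maxr _ _)).
have : 0 <= \tr Z * \det Z.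
  apply: psd_mx2_tr_det_ge0; first by rewrite !adjmxM adjmxK adjmx_rho mulmxA.
  move=> u; case: rho_dm => _ rho_psd _.
  by have := rho_psd (M *m u); rewrite adjmxM !mulmxA.
rewrite mxtrace_reduced mul1r le0r (negPf det_neq0) /= [X in \det X]reduced_bloch.
rewrite det_bloch ltcR cbar0.
rewrite big_ord3 !lift0_ord3; nra.
Qed.

Section Decomposition.
Variables (K : nat) (mu : 'I_K -> R) (psi : 'I_K -> 'cV[C]_d).
Hypothesis decomposition : pure_decomposition rho mu psi.
Definition reduced_vec k : 'cV[C]_2 := adjmx M *m psi k.
Local Notation phi := reduced_vec.
Local Notation c k := (bloch_coord (phi k *m adjmx (phi k))).

Lemma psi_range k : M *m phi k = psi k.
Proof.
set u := psi k - M *m phi k.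
have Mu : adjmx M *m u = 0.
  by rewrite /u /phi mulmxBr [adjmx M *m (M *m _)]mulmxA M_isometry mul1mx subrr.
have uM : adjmx u *m M = 0.
  by have := congr1 (@adjmx R _ _) Mu; rewrite adjmxM adjmxK adjmx0.
have u_rho : (adjmx u *m rho *m u) 0 0 = 0.
  by rewrite -rho_range !mulmxA uM !mul0mx mxE.
have u_psi := pure_decomposition_orthogonal decomposition u_rho k.
have : adjmx u *m u = 0.
  by rewrite {2}/u mulmxBr u_psi [adjmx u *m (M *m _)]mulmxA uM mul0mx subrr.
by move/adjmx_mul_eq0/eqP; rewrite subr_eq0 => /eqP.
Qed.

Lemma reduced_vec_unit k : adjmx (phi k) *m phi k = 1.
Proof. by rewrite {1}/phi adjmxM adjmxK -mulmxA psi_range; case: decomposition. Qed.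

Lemma reduced_mixture : reduced = \sum_k (mu k)%:C *: (phi k *m adjmx (phi k)).
Proof.
rewrite /reduced; case: decomposition => _ _ _ ->.
rewrite mulmx_sumr mulmx_suml; apply: eq_bigr => k _.
by rewrite -scalemxAr -scalemxAl /phi adjmxM adjmxK !mulmxA.
Qed.

Lemma cbar_mean j : cbar j = \sum_k mu k * c k j.
Proof. by rewrite reduced_mixture bloch_coord_sum. Qed.

Lemma corr_length_psi k :
  corr_length_pure (psi k) = (bform (gram M) (c k) (c k))%:C.
Proof.
rewrite /corr_length_pure -{1 2}(psi_range k) adjmxM mulmxA -[M *m phi k *m _]mulmxA.
by rewrite -{1}(bloch_coordK (adjmx_pure (phi k))) corr_length_compress_bloch.
Qed.

Lemma mean_corr_length (w : R) :
  \sum_k (mu k)%:C * corr_length_pure (psi k) =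
  corr_length rho + 2^-1 * (1 - \tr (rho *m rho)) * w%:C +
  (\sum_k mu k * (bform (gram M) (fun i => c k i - cbar i) (fun i => c k i - cbar i)
                  - w * \sum_i (c k i - cbar i) ^+ 2))%:C.
Proof.
have mu_sum : \sum_k mu k = 1 by case: decomposition.
have c_sqr k : \sum_i c k i ^+ 2 = 1 / 2 by rewrite bloch_coord_pure_sqr ?reduced_vec_unit.
rewrite (eq_bigr (fun k => (mu k * bform (gram M) (c k) (c k))%:C)) => [|k _]; last first.
  by rewrite corr_length_psi rmorphM.
rewrite -rmorph_sum (bform_barycentre_sphere w (gram_sym M) mu_sum cbar_mean c_sqr).
have inv2 : (2^-1 : C) = (2^-1 : R)%:C by rewrite fmorphV rmorph_nat.
have one : (1 : C) = (1 : R)%:C by rewrite rmorph1.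
rewrite corr_length_rho mxtrace_rho_sqr inv2 one -rmorphB -!rmorphM -!rmorphD.
by congr (_%:C); field.
Qed.

Lemma mean_gap_ge0 (w : R) :
  (forall x, eigenvalue (\matrix_(i, j) (gram M (lift ord0 i) (lift ord0 j))%:C) x ->
    w%:C <= x) ->
  0 <= \sum_k mu k * (bform (gram M) (fun i => c k i - cbar i) (fun i => c k i - cbar i)
                      - w * \sum_i (c k i - cbar i) ^+ 2).
Proof.
move=> hw; apply: sumr_ge0 => k _; case: decomposition => mu_gt0 _ _ _.
apply: mulr_ge0; first exact: ltW.
rewrite subr_ge0 (bform_lift0_ge (gram_sym M) hw) //.
by rewrite bloch_coord_pure0 ?reduced_vec_unit // cbar0 subrr.
Qed.

End Decomposition.

Lemma lift_decomposition K (mu : 'I_K -> R) (chi : 'I_K -> 'cV[C]_2) :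
  (forall k, 0 < mu k) -> \sum_k mu k = 1 -> (forall k, adjmx (chi k) *m chi k = 1) ->
  (forall j, cbar j = \sum_k mu k * bloch_coord (chi k *m adjmx (chi k)) j) ->
  pure_decomposition rho mu (fun k => M *m chi k).
Proof.
move=> mu_gt0 mu_sum chi_unit cbar_eq; split => //.
  by move=> k; rewrite adjmxM -mulmxA (mulmxA (adjmx M)) M_isometry mul1mx chi_unit.
rewrite {1}rho_compress {1}reduced_bloch.
transitivity (M *m (\sum_k (mu k)%:C *: (chi k *m adjmx (chi k))) *m adjmx M); last first.
  rewrite mulmx_sumr mulmx_suml; apply: eq_bigr => k _.
  by rewrite -scalemxAr -scalemxAl adjmxM !mulmxA.
congr (M *m _ *m adjmx M).
rewrite (eq_bigr (fun k => (mu k)%:C *: bloch (bloch_coord (chi k *m adjmx (chi k)))))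
  => [|k _]; last by rewrite bloch_coordK // adjmx_pure.
by rewrite -bloch_sum; apply: eq_bloch.
Qed.

Section OptimalDecomposition.
Variables (w : R) (e : 'I_3 -> R).
Hypotheses (e_unit : \sum_i e i ^+ 2 = 1)
  (e_eigen : forall j, \sum_i e i * gram M (lift ord0 i) (lift ord0 j) = w * e j)
  (rank_rho : \rank rho = 2%N).

Lemma optimal_decomposition : exists K (mu : 'I_K -> R) (psi : 'I_K -> 'cV[C]_d),
  pure_decomposition rho mu psi /\
  \sum_k (mu k)%:C * corr_length_pure (psi k) =
  corr_length rho + 2^-1 * (1 - \tr (rho *m rho)) * w%:C.
Proof.
pose r i := 2 * cbar (lift ord0 i).
have [t1 [t2 [m [/andP [m_gt0 m_lt1] mt_eq0 r_t1 r_t2]]]] :=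
  chord_through (cbar_interior rank_rho) e_unit.
have [phi1 phi1_unit c1] := pure_state_of_bloch r_t1.
have [phi2 phi2_unit c2] := pure_state_of_bloch r_t2.
pose t (k : 'I_2) := if k == q0 then t1 else t2.
pose chi (k : 'I_2) := if k == q0 then phi1 else phi2.
pose mu (k : 'I_2) := if k == q0 then m else 1 - m.
have chi_unit k : adjmx (chi k) *m chi k = 1 by case: (ord2P k) => ->.
have c_lift k i : bloch_coord (chi k *m adjmx (chi k)) (lift ord0 i) =
    cbar (lift ord0 i) + t k * e i / 2.
  by case: (ord2P k) => ->; rewrite /chi /t /= ?c1 ?c2 /r; field.
have phi_chi k : reduced_vec (fun k => M *m chi k) k = chi k.
  by rewrite /reduced_vec mulmxA M_isometry mul1mx.
have mu_gt0 k : 0 < mu k by case: (ord2P k) => ->; rewrite /mu /=; lra.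
have mu_sum : \sum_k mu k = 1 by rewrite big_ord2 /mu /=; lra.
have cbar_eq j : cbar j = \sum_k mu k * bloch_coord (chi k *m adjmx (chi k)) j.
  rewrite big_ord2; case: (unliftP ord0 j) => [i ->|->]; last first.
    by rewrite !bloch_coord_pure0 // cbar0 /mu /=; field.
  rewrite !c_lift /mu /t /=.
  transitivity (cbar (lift ord0 i) + (m * t1 + (1 - m) * t2) * e i / 2); last by ring.
  by rewrite mt_eq0 mul0r mul0r addr0.
have dec := lift_decomposition mu_gt0 mu_sum chi_unit cbar_eq.
exists 2%N, mu, (fun k => M *m chi k); split => //.
rewrite (mean_corr_length dec w) big1 ?rmorph0 ?addr0 // => k _.
rewrite phi_chi (bform_lift0_eigenvector e_eigen (t := t k / 2)) ?subrr ?mulr0 //.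
  by rewrite bloch_coord_pure0 // cbar0 subrr.
by move=> i; rewrite c_lift; field.
Qed.

End OptimalDecomposition.

Theorem convex_roof_compressed (w : R) : \rank rho = 2%N ->
  let W := \matrix_(i, j) (gram M (lift ord0 i) (lift ord0 j))%:C in
  eigenvalue W w%:C -> (forall x, eigenvalue W x -> w%:C <= x) ->
  convex_roof_value rho (corr_length rho + 2^-1 * (1 - \tr (rho *m rho)) * w%:C).
Proof.
move=> rank_rho W w_eig w_min; split.
  have [e e_unit e_eigen] := real_eigenvector w_eig.
  exact: (optimal_decomposition e_unit e_eigen rank_rho).
move=> K mu psi dec; rewrite (mean_corr_length dec w) lerDl ler0c.
exact: mean_gap_ge0.
Qed.

End ConvexRoof.

Theorem theorem5 (R : realType) (N : nat) (rho : 'M[R[i]]_(2 ^ N))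
    (v0 v1 : 'cV[R[i]]_(2 ^ N)) (wmin : R[i]) :
  density_matrix rho ->
  \rank rho = 2%N ->
  adjmx v0 *m v0 = 1 -> adjmx v1 *m v1 = 1 -> adjmx v0 *m v1 = 0 ->
  (col_mx v0^T v1^T == rho^T)%MS ->
  eigenvalue (Wmat v0 v1) wmin ->
  (forall w, eigenvalue (Wmat v0 v1) w -> wmin <= w) ->
  convex_roof_value rho
    (corr_length rho + 2^-1 * (1 - \tr (rho *m rho)) * wmin).
Proof.
move=> rho_dm rank_rho v0_unit v1_unit v01_orth /andP [_ rho_span] w_eig w_min.
have M_iso := isometry_row_mx v0_unit v1_unit v01_orth.
rewrite -tr_row_mx in rho_span.
rewrite Wmat_gram in w_eig w_min.
have wmin_real := spectral_lb_real (fun i j => gram_sym _ _ _) (isT : 0 < 3)%N w_min.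
rewrite wmin_real in w_eig w_min *.
have rho_range := range_isometry M_iso rho_span.
exact: (convex_roof_compressed M_iso rho_dm rho_range rank_rho w_eig w_min).
Qed.
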